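(* Let $V=\{v_1,\dots,v_n\}$ be the cities of a symmetric TSP instance on the complete graph $K_n$ with nonnegative edge weights $w$. Let $I$ (white edges) and $X$ (excluded edges) be disjoint sets of edges, and let $g$ be a Hamiltonian cycle on $V$ that contains every edge of $I$ and no edge of $X$. Then the weight of the constrained MST with respect to $(I,X)$ is at most the weight $w(g)=\sum_{e\in g}w(e)$.
   Context: The constrained MST with respect to $(I,X)$ is the spanning tree of $\{v_2,\dots,v_n\}$ produced by Prim's algorithm on the complete graph on $\{v_2,\dots,v_n\}$ in which all edges of $X$ are discarded and any edge of $I$ crossing the current cut is given the highest priority (selected before any edge not in $I$), the remaining candidate edges being ranked by weight. Its weight is the sum of the weights of its edges. In the paper's setting, $I$ and $X$ are the white and excluded edges of a Stem-and-Cycle configuration $c$ in an ejection chain, and $g$ is the goal tour toward which these constraints lead, which therefore contains all of $I$ and none of $X$. *)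

From HB Require Import structures.
From mathcomp Require Import all_boot all_order all_algebra.
Set Implicit Arguments. Unset Strict Implicit. Unset Printing Implicit Defensive.
Import Order.TTheory GRing.Theory Num.Theory.
Local Open Scope ring_scope.

Definition is_edge (T : finType) (e : {set T}) : bool := #|e| == 2%N.

Definition cycle_edges (T : finType) (s : seq T) : {set {set T}} :=
  [set [set x; next s x] | x in s].

Definition hamiltonian_cycle (T : finType) (g : {set {set T}}) : Prop :=
  (3 <= #|T|)%N /\
  exists s : seq T, [/\ uniq s, (forall x : T, x \in s) & g = cycle_edges s].

(* Vertex set of the constrained MST: all cities except v1. *)
Definition Uset (T : finType) (v1 : T) : {set T} := [set: T] :\ v1.

Definition prim_cand (T : finType) (v1 : T) (X : {set {set T}})
  (S : {set T}) (e : {set T}) : bool :=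
  [&& is_edge e, e \subset Uset v1, e \notin X & #|e :&: S| == 1%N].

(* e is a legal choice of Prim's algorithm at cut S: it is a candidate,
   every I-edge crossing the cut has priority over non-I edges, and a
   non-I edge is chosen of minimum weight among the candidates.
   (Ties are broken arbitrarily.) *)
Definition prim_choice (T : finType) (R : realDomainType) (w : {set T} -> R)
  (v1 : T) (I X : {set {set T}}) (S : {set T}) (e : {set T}) : Prop :=
  prim_cand v1 X S e /\
  forall f, prim_cand v1 X S f ->
    (f \in I -> e \in I) /\ (e \notin I -> w e <= w f).

Definition prim_reached (T : finType) (r : T) (es : seq {set T}) (k : nat)
  : {set T} := r |: \bigcup_(e <- take k es) e.

Definition prim_run (T : finType) (R : realDomainType) (w : {set T} -> R)
  (v1 : T) (I X : {set {set T}}) (r : T) (es : seq {set T}) : Prop :=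
  [/\ r \in Uset v1,
      (forall k, (k < size es)%N ->
         prim_choice w v1 I X (prim_reached r es k) (nth set0 es k))
    & prim_reached r es (size es) = Uset v1].

Definition tree_weight (T : finType) (R : realDomainType) (w : {set T} -> R)
  (es : seq {set T}) : R := \sum_(e <- es) w e.

From HB Require Import structures.
From mathcomp Require Import all_boot all_order all_algebra.
Import Order.TTheory GRing.Theory Num.Theory.
Set Implicit Arguments. Unset Strict Implicit. Unset Printing Implicit Defensive.
Local Open Scope ring_scope.

(* Let Q be the edges of g inside U = V \ {v1}: they contain the white edges
   in U, avoid X, and connect U (g minus v1 is a Hamiltonian path of U).
   Follow a run of Prim's algorithm. When it picks an edge e leaving the
   reached set S, the vertex e adds to S is joined to S by a path in Q, so
   some edge f of Q leaves S. If e is white, take f := e; otherwise f is not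
   white (white edges have priority) and w e <= w f. Removing f from Q keeps
   U connected to S :|: e, so every tree edge is paid for by a distinct edge
   of Q, and the tree weighs at most w(Q) <= w(g). The same invariant, which
   always provides a crossing candidate, shows that Prim's algorithm runs to
   completion. *)

Section Reach.
Variable T : finType.
Implicit Types (Q : {set {set T}}) (A B S : {set T}) (a b x y : T).

Inductive reach Q A : T -> Prop :=
| reach_in x : x \in A -> reach Q A x
| reach_cons x y : [set x; y] \in Q -> reach Q A y -> reach Q A x.

Lemma reach_trans Q A B x :
  reach Q A x -> (forall y, y \in A -> reach Q B y) -> reach Q B x.
Proof. by move=> Rx RB; elim: Rx => [y /RB // | z y zy _ /(reach_cons zy)]. Qed.

Lemma reach_sub Q A B x : A \subset B -> reach Q A x -> reach Q B x.
Proof. by move=> /subsetP AB Rx; apply: (reach_trans Rx) => y /AB/reach_in. Qed.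

Lemma reach_sym Q x y : reach Q [set y] x -> reach Q [set x] y.
Proof.
elim=> [z /set1P -> | z t zt _ Rt]; first exact/reach_in/set11.
apply: (reach_trans Rt) => u /set1P ->.
by apply: (@reach_cons _ _ t z); [rewrite setUC | exact/reach_in/set11].
Qed.

Lemma reach_path Q x p :
  path (fun y z => [set z; y] \in Q) x p ->
  forall y, y \in x :: p -> reach Q [set x] y.
Proof.
elim: p x => [|z p IHp] x /=; first by move=> _ y /[!inE] /eqP ->; apply/reach_in/set11.
case/andP=> zx /IHp Rz y /[!inE] /orP[/eqP -> |yp]; first exact/reach_in/set11.
apply: (reach_trans (Rz y yp)) => _ /set1P ->.
by apply: (reach_cons zx); apply/reach_in/set11.
Qed.

Lemma reach_remove_edge Q S B a b x :
  b \in S -> S \subset B -> reach (Q :\ [set a; b]) B a ->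
  reach Q S x -> reach (Q :\ [set a; b]) B x.
Proof.
move=> bS /subsetP SB Ra; elim=> [z /SB /reach_in // | z y zy _ Ry].
have [zyab | zyab] := eqVneq [set z; y] [set a; b].
  have /set2P[-> // | ->] : z \in [set a; b] by rewrite -zyab set21.
  exact/reach_in/SB.
by apply: (reach_cons _ Ry); rewrite !inE zyab.
Qed.

Lemma reach_exit Q S v :
  reach Q S v -> v \notin S -> exists a b, [/\ a \notin S, b \in S,
    [set a; b] \in Q & reach (Q :\ [set a; b]) [set v] a].
Proof.
elim=> [z -> // | z y zy _ IHy] zS.
have [yS | yS] := boolP (y \in S).
  by exists z, y; split => //; apply/reach_in/set11.
have [a [b [aS bS abQ Ra]]] := IHy yS.
exists a, b; split => //; apply: (reach_trans Ra) => _ /set1P ->.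
apply: (@reach_cons _ _ y z); last exact/reach_in/set11.
rewrite !inE setUC zy andbT; apply: contraNneq zS => yzab.
have /set2P[<- // | yb] : b \in [set z; y] by rewrite yzab set22.
by rewrite yb in bS; rewrite bS in yS.
Qed.

Lemma set1I x S : [set x] :&: S = if x \in S then [set x] else set0.
Proof. by case: ifP => xS; apply/setP => y; rewrite !inE; case: eqP => // ->. Qed.

Lemma cut_edgeP e S :
  is_edge e -> #|e :&: S| == 1%N ->
  exists u v, [/\ u \in S, v \notin S & e = [set u; v]].
Proof.
move=> /cards2P[x [y [xy ->]]]; rewrite setIUl !set1I.
case xS: (x \in S); case yS: (y \in S); rewrite ?setU0 ?set0U ?cards1 //.
- by rewrite cards2 xy.
- by exists x, y; rewrite yS.
- by exists y, x; rewrite xS setUC.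
- by rewrite cards0.
Qed.

Lemma card_cut_pair S a b :
  a \notin S -> b \in S -> #|[set a; b] :&: S| = 1%N.
Proof.
by move=> aS bS; rewrite setIUl !set1I (negbTE aS) bS set0U cards1.
Qed.

End Reach.

Section Prim.
Variables (R : realDomainType) (T : finType) (v1 : T) (w : {set T} -> R)
  (I X : {set {set T}}).
Hypothesis w_ge0 : forall e : {set T}, is_edge e -> 0 <= w e.

Local Notation U := (Uset v1).

Definition prim_run_from (S : {set T}) (es : seq {set T}) : Prop :=
  forall k, (k < size es)%N ->
    prim_choice w v1 I X (S :|: \bigcup_(e <- take k es) e) (nth set0 es k).

Lemma prim_run_from_cons S e es :
  prim_run_from S (e :: es) <->
  prim_choice w v1 I X S e /\ prim_run_from (S :|: e) es.
Proof.
split=> [run | [choice_e run] [|k] /= ltk]; last 2 first.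
- by rewrite big_nil setU0.
- by rewrite big_cons setUA; apply: run.
split=> [|k ltk]; first by have := run 0%N isT; rewrite big_nil setU0.
by have := run k.+1 ltk; rewrite /= big_cons setUA.
Qed.

Lemma prim_choice_exists S f :
  prim_cand v1 X S f -> exists e, prim_choice w v1 I X S e.
Proof.
move=> cand_f.
case: (pickP (fun e => prim_cand v1 X S e && (e \in I))) => [e /andP[cand_e eI] | noI].
  by exists e; split=> // h _; rewrite eI.
have [e cand_e min_e] := arg_minP w cand_f.
exists e; split=> // h cand_h; split=> [hI | _]; last exact: min_e.
by have := noI h; rewrite cand_h hI.
Qed.

Definition exchange_inv (S : {set T}) (Q : {set {set T}}) : Prop :=
  [/\ forall f, f \in Q -> [&& is_edge f, f \subset U & f \notin X],
      forall f, f \in I -> f \subset U -> ~~ (f \subset S) -> f \in Q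
    & forall x, x \in U -> reach Q S x].

Lemma exchange_inv_cand S Q a b :
  exchange_inv S Q -> [set a; b] \in Q -> a \notin S -> b \in S ->
  prim_cand v1 X S [set a; b].
Proof.
move=> [usable _ _] /usable/and3P[Eab abU abX] aS bS.
by rewrite /prim_cand Eab abU abX card_cut_pair.
Qed.

Lemma exchange_step S Q e :
  exchange_inv S Q -> prim_choice w v1 I X S e ->
  exists2 f, f \in Q & w e <= w f /\ exchange_inv (S :|: e) (Q :\ f).
Proof.
move=> inv [cand_e choice_e]; have [usable whiteQ reachQ] := inv.
have /and4P[Ee eU _ ecut] := cand_e.
have [u [v [uS vS def_e]]] := cut_edgeP Ee ecut.
have ve : v \in e by rewrite def_e set22.
have vU : v \in U by apply: (subsetP eU).
(* An edge of Q leaving S whose outer end is linked to S :|: e; unless it is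
   e itself, e is not white. *)
suff [a [b [abQ aS bS Ra exch]]] : exists a b, [/\ [set a; b] \in Q, a \notin S,
    b \in S, reach (Q :\ [set a; b]) (S :|: e) a & [set a; b] = e \/ e \notin I].
  have cand_ab := exchange_inv_cand inv abQ aS bS.
  have le_e_ab : w e <= w [set a; b].
    by case: exch => [-> // | eNI]; apply: (choice_e _ cand_ab).2.
  have white_ab : [set a; b] = e \/ [set a; b] \notin I.
    case: exch => [|eNI]; [by left | right].
    by apply: contraNN eNI => /(choice_e _ cand_ab).1.
  exists [set a; b] => //; split=> //; split.
  - by move=> f /setD1P[_ /usable].
  - move=> f fI fU fSe; rewrite !inE whiteQ //; last first.
      by apply: contra fSe => /subset_trans; apply; rewrite subsetUl.
    rewrite andbT; case: white_ab => [-> | abI]; last by apply: contraNneq abI => <-.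
    by apply: contraNneq fSe => ->; rewrite subsetUr.
  - by move=> x /reachQ; apply: reach_remove_edge; rewrite ?subsetUl.
have [eI | eNI] := boolP (e \in I).
  have def_e' : [set v; u] = e by rewrite def_e setUC.
  exists v, u; rewrite def_e'; split=> //; last by left.
  - by apply: whiteQ => //; apply: contra vS => /subsetP; apply.
  - by apply/reach_in; rewrite inE ve orbT.
have [a [b [aS bS abQ Ra]]] := reach_exit (reachQ v vU) vS.
exists a, b; split=> //; last by right.
by apply: reach_sub Ra; rewrite sub1set inE ve orbT.
Qed.

Lemma prim_run_from_weight (S : {set T}) (Q : {set {set T}}) es :
  exchange_inv S Q -> prim_run_from S es ->
  \sum_(e <- es) w e <= \sum_(f in Q) w f.
Proof.
elim: es S Q => [|e es IHes] S Q inv.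
  move=> _; rewrite big_nil; apply: sumr_ge0 => f fQ.
  by case: inv => /(_ f fQ) /and3P[Ef _ _] _ _; apply: w_ge0.
move=> /prim_run_from_cons[choice_e run].
have [f fQ [le_ef inv']] := exchange_step inv choice_e.
by rewrite big_cons (big_setD1 f fQ) lerD // (IHes _ _ inv').
Qed.

Lemma prim_run_from_exists (S : {set T}) (Q : {set {set T}}) :
  S \subset U -> exchange_inv S Q ->
  exists es, prim_run_from S es /\ S :|: \bigcup_(e <- es) e = U.
Proof.
move def_n: #|U :\: S| => n; elim/ltn_ind: n S Q def_n => n IHn S Q def_n SU inv.
have [S_U | [v /setDP[vU vS]]] := set_0Vmem (U :\: S).
  exists [::]; split=> [k|]; first by rewrite ltn0.
  rewrite big_nil setU0.
  by apply/eqP; rewrite eqEsubset SU -setD_eq0 S_U eqxx.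
have [_ _ reachQ] := inv.
have [a [b [aS bS abQ _]]] := reach_exit (reachQ v vU) vS.
have [e choice_e] := prim_choice_exists (exchange_inv_cand inv abQ aS bS).
have [f _ [_ inv']] := exchange_step inv choice_e.
have /and4P[Ee eU _ ecut] := choice_e.1.
have [u [v' [_ v'S def_e]]] := cut_edgeP Ee ecut.
have [||es [run cover]] := IHn _ _ (S :|: e) (Q :\ f) erefl _ inv'.
- rewrite -def_n proper_card //; apply/properP; split; first by rewrite setDS ?subsetUl.
  have v'U : v' \in U by apply: (subsetP eU); rewrite def_e set22.
  by exists v'; rewrite in_setD ?v'S ?v'U // in_setU def_e set22 orbT.
- by rewrite subUset SU.
by exists (e :: es); split; [apply/prim_run_from_cons | rewrite big_cons setUA].
Qed.

End Prim.

Lemma next_neq (T : eqType) (s : seq T) x :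
  uniq s -> (1 < size s)%N -> x \in s -> next s x != x.
Proof.
move=> us s_gt1 /rot_to[i [|y q] def_s]; first by rewrite -(size_rot i) def_s in s_gt1.
rewrite -(next_rot i us) def_s /= eqxx eq_sym.
by move: us; rewrite -(rot_uniq i) def_s /= inE negb_or => /andP[/andP[]].
Qed.

Lemma cycle_edges_is_edge (T : finType) (s : seq T) e :
  uniq s -> (1 < size s)%N -> e \in cycle_edges s -> is_edge e.
Proof.
by move=> us s_gt1 /imsetP[x xs ->]; rewrite /is_edge cards2 (eq_sym x) next_neq.
Qed.

Lemma uniq_all_size (T : finType) (s : seq T) :
  uniq s -> (forall x, x \in s) -> size s = #|T|.
Proof. by move=> us alls; rewrite -(card_uniqP us); apply: eq_card. Qed.

(* Removing v1 from a Hamiltonian cycle leaves a path through all of U. *)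
Lemma cycle_edges_reach (T : finType) (s : seq T) (v1 r x : T) :
  uniq s -> (forall x, x \in s) -> r \in Uset v1 -> x \in Uset v1 ->
  reach (cycle_edges s :&: powerset (Uset v1)) [set r] x.
Proof.
move=> us alls; have [i p def_s] := rot_to (alls v1).
have /andP[v1p _] : uniq (v1 :: p) by rewrite -def_s rot_uniq.
have memU z : (z \in Uset v1) = (z \in p).
  have := alls z; rewrite -(mem_rot i) def_s !inE andbT.
  by case: eqVneq => [-> | //]; rewrite (negbTE v1p).
case: p def_s v1p memU => [|y q] def_s v1p memU; first by rewrite memU.
have : path (frel (next s)) y q.
  have := cycle_next us; rewrite -(rot_cycle i) def_s /= rcons_path.
  by case/and3P.
move=> /(@sub_in_path _ (mem (Uset v1))) yq_path.
have reach_y z : z \in Uset v1 -> reach (cycle_edges s :&: powerset (Uset v1)) [set y] z.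
  rewrite memU; apply: reach_path; apply: yq_path; last by apply/allP => z'; rewrite -memU.
  move=> a b aU bU /eqP def_b; rewrite -def_b in bU.
  by rewrite !inE setUC -def_b (imset_f (fun z => [set z; next s z])) //= subUset !sub1set aU bU.
move=> /reach_y /reach_sym Rr /reach_y Rx.
by apply: (reach_trans Rx) => _ /set1P ->.
Qed.

Theorem lemma2 (R : realDomainType) (T : finType) (v1 : T)
  (w : {set T} -> R) (I X g : {set {set T}}) :
  (forall e : {set T}, is_edge e -> 0 <= w e) ->
  (forall e, e \in I -> is_edge e) ->
  (forall e, e \in X -> is_edge e) ->
  [disjoint I & X] ->
  hamiltonian_cycle g ->
  I \subset g ->
  [disjoint g & X] ->
  (exists r es, prim_run w v1 I X r es) /\
  (forall r es, prim_run w v1 I X r es ->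
     tree_weight w es <= \sum_(e in g) w e).
Proof.
move=> w_ge0 _ _ _ [T_ge3 [s [us alls def_g]]] Ig gX.
have s_gt1 : (1 < size s)%N by rewrite uniq_all_size // (leq_trans _ T_ge3).
have g_edge f : f \in g -> is_edge f by rewrite def_g; apply: cycle_edges_is_edge.
set Q := g :&: powerset (Uset v1).
have inv r : r \in Uset v1 -> exchange_inv v1 I X [set r] Q.
  move=> rU; split.
  - by move=> f /setIP[fg]; rewrite powersetE g_edge //= (disjointFr gX fg) andbT.
  - by move=> f fI fU _; rewrite inE (subsetP Ig) // powersetE.
  - by move=> x xU; rewrite /Q def_g; apply: cycle_edges_reach.
split.
  have /set0Pn[r rU] : Uset v1 != set0.
    by rewrite -card_gt0 /Uset setTD cardsC1; case: #|T| T_ge3 => [|[|[]]].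
  have [|es [run cover]] := prim_run_from_exists w _ (inv r rU); first by rewrite sub1set.
  by exists r, es; split; rewrite // /prim_reached take_size.
move=> r es [rU run _]; apply: le_trans (prim_run_from_weight w_ge0 (inv r rU) run) _.
rewrite [leRHS](big_setID (powerset (Uset v1))) lerDl.
by apply: sumr_ge0 => f /setDP[/g_edge /w_ge0].
Qed.
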